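(* For $i=1,\dots,n$ let $A_i\in\mathbb{R}^{m_i\times r}$, $b_i\in\mathbb{R}^{m_i}$ and let $X_i\subset\mathbb{R}^r$ be closed convex, $X=\bigcap_i X_i$. Suppose the set $\mathbf{X}^*=\{x\in X: A_ix-b_i\le0 \text{ (componentwise) for all } i\}$ is non-empty. Let $n$ agents communicate over a fixed directed strongly connected graph with nonnegative weights $a_{ij}$ ($a_{ij}>0$ iff $j\in N_i$), and let $\tau>0$. Let $x_i(t)\in\mathbb{R}^r$ evolve according to $$\dot x_i(t)=\sum_{j\in N_i}a_{ij}(x_j(t)-x_i(t))-\tau\Big(A_i^T(A_ix_i(t)-b_i)^+ + x_i(t)-P_{X_i}(x_i(t))\Big),\quad i=1,\dots,n.$$ Then there is a vector $x^*\in\mathbf{X}^*$ such that $\lim_{t\to\infty}x_i(t)=x^*$ for all $i$.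
   Context: For a vector $y=[y_1,\dots,y_k]^T$, $y^+=[\max(y_1,0),\dots,\max(y_k,0)]^T$. $P_{X_i}$ is the Euclidean projection onto $X_i$. *)

From HB Require Import structures.
From mathcomp Require Import all_boot all_order all_algebra.
From mathcomp Require Import all_classical all_reals all_analysis.
Set Implicit Arguments. Unset Strict Implicit. Unset Printing Implicit Defensive.
Import Order.TTheory GRing.Theory Num.Theory.
Import numFieldNormedType.Exports.
Local Open Scope classical_set_scope.
Local Open Scope ring_scope.

Definition sqnorm {R : realType} {r : nat} (v : 'cV[R]_r) : R :=
  \sum_(k < r) (v k 0) ^+ 2.

Definition convex_cV {R : realType} {r : nat} (S : set 'cV[R]_r) : Prop :=
  forall x y (l : R), S x -> S y -> 0 <= l -> l <= 1 ->
    S (l *: x + (1 - l) *: y).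

Definition is_proj {R : realType} {r : nat} (S : set 'cV[R]_r) (x p : 'cV[R]_r) : Prop :=
  S p /\ forall y, S y -> sqnorm (x - p) <= sqnorm (x - y).

(* P_S(x): the Euclidean projection (well defined when S is nonempty, closed
   and convex; an arbitrary default x otherwise) *)
Definition eproj {R : realType} {r : nat} (S : set 'cV[R]_r) (x : 'cV[R]_r) : 'cV[R]_r :=
  xget x [set p | is_proj S x p].

Definition pospart {R : realType} {m : nat} (y : 'cV[R]_m) : 'cV[R]_m :=
  map_mx (fun c => Num.max c 0) y.

From HB Require Import structures.
From mathcomp Require Import all_boot all_order all_algebra.
From mathcomp Require Import all_classical all_reals all_analysis.
From mathcomp Require Import ring lra.
Import Order.TTheory GRing.Theory Num.Theory.
Import numFieldNormedType.Exports.
Local Open Scope classical_set_scope.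
Local Open Scope ring_scope.
Set Implicit Arguments. Unset Strict Implicit. Unset Printing Implicit Defensive.

(* Weight agent [i] by [w i > 0], where [w] is a left null vector of the graph
   Laplacian (positive by strong connectivity).  For feasible [z], the function
   [V z t = \sum_i w i |x_i t - z|^2] satisfies [V' <= - G], where the
   dissipation [G] is the weighted disagreement between neighbours plus [2 tau]
   times the weighted constraint violation and distance to the [X_i]: balance
   of [w] turns the consensus part of [V'] into minus the disagreement, and the
   other terms are controlled by the obtuse-angle property of projections.
   Hence the trajectories are bounded and [G] is small at arbitrarily late
   times; a cluster point along such times is a consensus point (strong
   connectivity) that is feasible (closedness).  Taking [z] to be this point,
   [V z] is nonincreasing and gets arbitrarily small, so every [x_i] converges
   to it. *)

Definition dot {R : realType} {r : nat} (u v : 'cV[R]_r) : R :=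
  \sum_(k < r) u k 0 * v k 0.

Section RealFacts.
Variable R : realType.

Lemma norm_lt_of_sqr_lt (d c : R) : 0 < c -> d ^+ 2 < c ^+ 2 -> `|d| < c.
Proof.
by move=> c0; rewrite -real_normK ?num_real // ltr_pXn2r // nnegrE ltW.
Qed.

Lemma norm_le_1_sqr (d : R) : `|d| <= 1 + d ^+ 2.
Proof. have := real_normK (num_real d); have := normr_ge0 d; nra. Qed.

Lemma ler_term_sum (I : finType) (F : I -> R) i :
  (forall j, 0 <= F j) -> F i <= \sum_j F j.
Proof. by move=> F0; rewrite (bigD1 i) //= lerDl; apply: sumr_ge0. Qed.

End RealFacts.

Section Euclid.
Variables (R : realType) (r : nat).
Implicit Types (u v y z : 'cV[R]_r).

Lemma sqnorm_ge0 v : 0 <= sqnorm v.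
Proof. by apply: sumr_ge0 => k _; exact: sqr_ge0. Qed.

Lemma sqr_entry_le_sqnorm v k : v k 0 ^+ 2 <= sqnorm v.
Proof. by apply: ler_term_sum => j; exact: sqr_ge0. Qed.

Lemma norm_entry_lt_of_sqnorm v k (d : R) :
  0 < d -> sqnorm v < d ^+ 2 -> `|v k 0| < d.
Proof.
move=> d0 vd; apply: norm_lt_of_sqr_lt => //.
exact: le_lt_trans (sqr_entry_le_sqnorm v k) vd.
Qed.

Lemma sqnorm_le_of_entries v (d : R) :
  (forall k, `|v k 0| <= d) -> sqnorm v <= r%:R * d ^+ 2.
Proof.
move=> vd; apply: (@le_trans _ _ (\sum_(k < r) d ^+ 2)); last first.
  by rewrite sumr_const card_ord mulr_natl.
apply: ler_sum => k _; rewrite -real_normK ?num_real //.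
by rewrite ler_pXn2r // nnegrE (le_trans (normr_ge0 _) (vd k)).
Qed.

Lemma dotDr y u v : dot y (u + v) = dot y u + dot y v.
Proof. by rewrite /dot -big_split; apply: eq_bigr => k _; rewrite !mxE mulrDr. Qed.

Lemma dotBr y u v : dot y (u - v) = dot y u - dot y v.
Proof. by rewrite /dot -sumrB; apply: eq_bigr => k _; rewrite !mxE mulrBr. Qed.

Lemma dotZr y (c : R) u : dot y (c *: u) = c * dot y u.
Proof. by rewrite /dot mulr_sumr; apply: eq_bigr => k _; rewrite !mxE mulrCA. Qed.

Lemma dot_sumr y n (c : 'I_n -> R) (v : 'I_n -> 'cV[R]_r) :
  dot y (\sum_j c j *: v j) = \sum_j c j * dot y (v j).
Proof.
rewrite /dot; under eq_bigr do rewrite summxE mulr_sumr.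
rewrite exchange_big /=; apply: eq_bigr => j _; rewrite mulr_sumr.
by apply: eq_bigr => k _; rewrite !mxE mulrCA.
Qed.

Lemma dot_trmx p (M : 'M[R]_(p, r)) y (c : 'cV[R]_p) :
  dot y (M^T *m c) = dot (M *m y) c.
Proof.
rewrite /dot; under eq_bigr do rewrite !mxE mulr_sumr.
under [RHS]eq_bigr do rewrite !mxE mulr_suml.
by rewrite exchange_big /=; apply: eq_bigr => l _; apply: eq_bigr => k _; rewrite !mxE; ring.
Qed.

Lemma dot_sub_sqnorm u v : 2 * dot u (v - u) = sqnorm v - sqnorm u - sqnorm (v - u).
Proof.
rewrite /dot /sqnorm -!sumrB mulr_sumr; apply: eq_bigr => k _; rewrite !mxE; ring.
Qed.

Lemma sqnorm_subZ u v (l : R) :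
  sqnorm (u - l *: v) = sqnorm u - 2 * l * dot u v + l ^+ 2 * sqnorm v.
Proof.
rewrite /sqnorm /dot !mulr_sumr -sumrB -big_split /=.
by apply: eq_bigr => k _; rewrite !mxE; ring.
Qed.

Lemma is_proj_obtuse (S : set 'cV[R]_r) y p z :
  convex_cV S -> is_proj S y p -> S z -> dot (y - p) (z - p) <= 0.
Proof.
move=> cS [Sp pmin] Sz.
set c := dot (y - p) (z - p); set q := sqnorm (z - p).
have q0 : 0 <= q by exact: sqnorm_ge0.
have c_le l : 0 < l -> l <= 1 -> 2 * c <= l * q.
  move=> l0 l1; have := pmin _ (cS z p l Sz Sp (ltW l0) l1).
  have -> : y - (l *: z + (1 - l) *: p) = (y - p) - l *: (z - p).
    by apply/matrixP => i j; rewrite !mxE; ring.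
  rewrite sqnorm_subZ -/c -/q => min_p.
  have : 0 <= l * (l * q - 2 * c) by nra.
  by rewrite pmulr_rge0 // subr_ge0.
rewrite leNgt; apply/negP => c0.
pose l := Num.min 1 (c / (q + 1)).
have l0 : 0 < l by rewrite lt_min ltr01 divr_gt0 // ltr_wpDl.
have l1 : l <= 1 by rewrite ge_min lexx.
have : l * (q + 1) <= c.
  by rewrite -ler_pdivlMr ?ltr_wpDl // ge_min lexx orbT.
have := c_le l l0 l1; nra.
Qed.

Lemma sqnorm_proj_le_dot (S : set 'cV[R]_r) y p z :
  convex_cV S -> is_proj S y p -> S z -> sqnorm (y - p) <= dot (y - z) (y - p).
Proof.
move=> cS hp Sz; have := is_proj_obtuse cS hp Sz.
have -> : dot (y - z) (y - p) = sqnorm (y - p) - dot (y - p) (z - p).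
  rewrite /sqnorm /dot -sumrB; apply: eq_bigr => k _; rewrite !mxE; ring.
lra.
Qed.

Lemma sqnorm_pospart_le_dot p (M : 'M[R]_(p, r)) (c : 'cV[R]_p) y z :
  (forall l, (M *m z - c) l 0 <= 0) ->
  sqnorm (pospart (M *m y - c)) <= dot (y - z) (M^T *m pospart (M *m y - c)).
Proof.
move=> Mz; rewrite dot_trmx; apply: ler_sum => l _; rewrite mxE.
have -> : (M *m (y - z)) l 0 = (M *m y - c) l 0 - (M *m z - c) l 0.
  by rewrite mulmxBr !mxE; ring.
have := Mz l; set s := (M *m y - c) l 0; set q := (M *m z - c) l 0.
rewrite /Num.max; case: ifPn => [_|]; first by rewrite expr2 !mulr0.
rewrite -leNgt => s0 q0; nra.
Qed.

Lemma sqr_entry_le_sqnorm_pospart v k : 0 <= v k 0 -> v k 0 ^+ 2 <= sqnorm (pospart v).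
Proof.
move=> vk; have := sqr_entry_le_sqnorm (pospart v) k.
by rewrite mxE /Num.max ltNge vk.
Qed.

Lemma affine_entry_lipschitz p (M : 'M[R]_(p, r)) (c : 'cV[R]_p) u v l (d : R) :
  (forall k, `|u k 0 - v k 0| <= d) ->
  `|(M *m u - c) l 0 - (M *m v - c) l 0| <= (\sum_k `|M l k|) * d.
Proof.
move=> uv; rewrite !mxE.
have -> : \sum_k M l k * u k 0 - c l 0 - (\sum_k M l k * v k 0 - c l 0) =
          \sum_k M l k * (u k 0 - v k 0).
  by under [RHS]eq_bigr do rewrite mulrBr; rewrite sumrB; ring.
apply: le_trans (ler_norm_sum _ _ _) _; rewrite mulr_suml.
by apply: ler_sum => k _; rewrite normrM ler_wpM2l.
Qed.

End Euclid.

Section Topology.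
Variable R : realType.

Lemma continuous_sumr (T : topologicalType) I (s : seq I) (g : I -> T -> R) :
  (forall k, continuous (g k)) -> continuous (fun y => \sum_(k <- s) g k y).
Proof.
move=> gc; elim: s => [|k s IH].
  by under eq_fun do rewrite big_nil; exact: cst_continuous.
under eq_fun do rewrite big_cons.
by move=> y; apply: continuousD; [exact: gc|exact: IH].
Qed.

Lemma continuous_sqnorm_sub r (x : 'cV[R]_r) :
  continuous (fun y : 'cV[R]_r => sqnorm (x - y)).
Proof.
apply: continuous_sumr => k y; under eq_fun do rewrite !mxE expr2.
have xk : continuous (fun y : 'cV[R]_r => x k 0 - y k 0).
  by move=> z; apply: continuousB; [exact: cst_continuous|exact: coord_continuous].
exact: continuousM (xk y) (xk y).
Qed.

Lemma box_compact m n (B : R) :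
  compact [set M : 'M[R]_(m, n) | forall i j, `|M i j| <= B].
Proof.
have vec_box : compact [set v : 'rV[R]_(m * n) | forall k, `[- B, B]%classic (v 0 k)].
  by apply: (@rV_compact _ _ (fun=> `[- B, B]%classic)) => _; exact: segment_compact.
have vec_mx_cont : continuous (@vec_mx R m n).
  move=> u U /nbhs_ballP[e /= e0 eU]; apply/nbhs_ballP; exists e => //= v [_ uv].
  by apply: eU; split => // i j; rewrite !mxE; exact: uv.
have := continuous_compact (continuous_subspaceT vec_mx_cont) vec_box.
congr compact; apply/seteqP; split => M /=.
  move=> [v vB <-] i j; have := vB (mxvec_index i j).
  by rewrite /= in_itv /= -ler_norml mxE.
move=> MB; exists (mxvec M); last by rewrite mxvecK.
by move=> k; case/mxvec_indexP: k => i j; rewrite /= in_itv /= mxvecE -ler_norml.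
Qed.

Lemma is_proj_exists r (S : set 'cV[R]_r) x : closed S -> S !=set0 ->
  exists p, is_proj S x p.
Proof.
move=> cS [z Sz].
pose f y := sqnorm (x - y); pose K := S `&` [set y | f y <= f z].
pose B := \sum_k `|x k 0| + 1 + f z.
have K_box : K `<=` [set M : 'cV[R]_r | forall i j, `|M i j| <= B].
  move=> y [_ /= fy] i j; rewrite [j]ord1.
  have := sqr_entry_le_sqnorm (x - y) i; rewrite !mxE => xy.
  have := ler_term_sum i (fun k => normr_ge0 (x k 0)).
  have := norm_le_1_sqr (x i 0 - y i 0).
  have := ler_distD (x i 0) 0 (y i 0); rewrite !sub0r !normrN.
  rewrite /B /f in fy *; lra.
have Kc : compact K.
  apply: subclosed_compact K_box; last exact: box_compact.
  apply: closedI => //.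
  have := (continuous_closedP _).1 (@continuous_sqnorm_sub r x) _ (@closed_le _ (f z)).
  by congr closed.
have K0 : K !=set0 by exists z; split => //=; rewrite /f lexx.
have [p Kp pmin] := compact_EVT_min K0 Kc
   (continuous_subspaceT (@continuous_sqnorm_sub r x)).
rewrite inE in Kp; case: Kp => Sp fp.
exists p; split => // y Sy.
case: (lerP (f y) (f z)) => fy; first by apply: pmin; rewrite inE.
exact: le_trans fp (ltW fy).
Qed.

Lemma eproj_is_proj r (S : set 'cV[R]_r) x : closed S -> S !=set0 ->
  is_proj S x (eproj S x).
Proof.
move=> cS S0; rewrite /eproj; case: xgetP => // /(_ _) no_proj.
by have [p /no_proj] := is_proj_exists x cS S0.
Qed.

Lemma compact_cluster (T : topologicalType) (K : set T) (S : R -> T) (g : R -> R) (c : R) :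
  compact K -> (forall t, c <= t -> K (S t)) ->
  (forall e, 0 < e -> exists t, c <= t /\ g t < e) ->
  exists p : T, forall e U, 0 < e -> nbhs p U ->
    exists t, [/\ c <= t, g t < e & U (S t)].
Proof.
move=> Kc SK g_small.
pose F := filter_from [set e : R | 0 < e] (fun e => [set t | c <= t /\ g t < e]).
have F_filter : ProperFilter F.
  apply: filter_from_proper; last first.
    by move=> e /g_small [t ?]; exists t.
  apply: filter_from_filter; first by exists 1 => /=.
  move=> e1 e2 /= e10 e20; exists (Num.min e1 e2) => /=; first by rewrite lt_min e10.
  by move=> t [/= ct]; rewrite lt_min => /andP[g1 g2].
have FK : (S @ F) K by exists 1 => //= t [ct _]; exact: SK.
have [p [_ p_cluster]] := Kc _ _ FK.
exists p => e U e0 pU.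
have [_ [[t [ct gt] <-] Ut]] := p_cluster (S @` [set t | c <= t /\ g t < e]) U
  (ex_intro2 _ _ e e0 (fun t Bt => ex_intro2 _ _ t Bt erefl)) pU.
by exists t.
Qed.

End Topology.

Section Calculus.
Variable R : realType.

Lemma is_derive_entry r (y : R -> 'cV[R]_r) (t : R) dy k :
  is_derive t 1 y dy -> is_derive t 1 (fun s => y s k 0) (dy k 0).
Proof.
move=> hy; have y_der : derivable y t 1 := @ex_derive _ _ _ _ _ _ _ hy.
apply: DeriveDef; first exact: (derivable_mxP y t 1).1 y_der k 0.
by have := derive_mx y_der; rewrite derive_val => ->; rewrite mxE.
Qed.

Lemma is_derive_sqnorm r (y : R -> 'cV[R]_r) z (t : R) dy :
  is_derive t 1 y dy ->
  is_derive t 1 (fun s => sqnorm (y s - z)) (2 * dot (y t - z) dy).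
Proof.
move=> hy; rewrite /dot mulr_sumr.
have -> : (fun s => sqnorm (y s - z)) = \sum_k (fun s => (y s k 0 - z k 0) ^+ 2).
  by apply/funext => s; rewrite fct_sumE; apply: eq_bigr => k _; rewrite !mxE.
apply: is_derive_sum => k.
have hk : is_derive t 1 (fun s => y s k 0 - z k 0) (dy k 0 - 0).
  exact: is_deriveB (is_derive_entry k hy) (is_derive_cst _ _ _).
apply: is_derive_eq (is_deriveX 2 hk) _.
by rewrite !mxE subr0 /GRing.scale /= expr1 mulrA.
Qed.

Lemma deriv_le0_nincr (f df : R -> R) (c : R) :
  (forall t, c < t -> is_derive t 1 f (df t)) ->
  (forall t, c < t -> df t <= 0) ->
  forall s t, c < s -> s <= t -> f t <= f s.
Proof.
move=> f_der df_le0 s t cs st.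
have f_derivable u : s <= u -> derivable f u 1.
  by move=> su; exact: (@ex_derive _ _ _ _ _ _ _ (f_der u (lt_le_trans cs su))).
apply: (@ler0_derive1_nincry R f s) => //.
- by move=> u; rewrite in_itv /= andbT => /ltW; exact: f_derivable.
- move=> u; rewrite in_itv /= andbT => su.
  have cu := lt_trans cs su; have fu := f_der u cu.
  by rewrite derive1E derive_val df_le0.
- apply: derivable_within_continuous => u; rewrite in_itv /= andbT.
  exact: f_derivable.
Qed.

(* If [g] were eventually [>= e], then [f t + e t] would be nonincreasing,
   forcing the nonnegative [f] below zero. *)
Lemma dissipation_small (f df g : R -> R) (c : R) :
  (forall t, c < t -> is_derive t 1 f (df t)) ->
  (forall t, c < t -> df t <= - g t) ->
  (forall t, 0 <= f t) ->
  forall T e, 0 < e -> exists t, T <= t /\ g t < e.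
Proof.
move=> f_der df_le f0 T e e0.
have [//|no_small] := pselect (exists t, T <= t /\ g t < e).
have g_ge t : T <= t -> e <= g t.
  by move=> Tt; rewrite leNgt; apply/negP => gt; apply: no_small; exists t.
pose c' := Num.max c T.
have U_nincr : forall s t, c' < s -> s <= t -> f t + e * t <= f s + e * s.
  apply: (@deriv_le0_nincr (f + (fun t => e * t)) (fun t => df t + e * 1)) => u.
    by rewrite gt_max => /andP[cu _]; apply: is_deriveD; exact: f_der.
  rewrite gt_max => /andP[cu Tu]; have := df_le u cu; have := g_ge u (ltW Tu); lra.
pose s := c' + 1; pose t := s + f s / e + 1.
have fe : e * t = e * s + f s + e by rewrite /t; field; exact: lt0r_neq0.
have := U_nincr s t; rewrite /s /t ltrDl ltr01 fe => /(_ isT).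
have := f0 t; have : 0 <= f s / e by rewrite divr_ge0 ?f0 ?ltW.
rewrite /t /s; lra.
Qed.

End Calculus.

Definition balanced {R : realType} {n : nat} (a : 'I_n -> 'I_n -> R) (w : 'I_n -> R) :=
  forall j, \sum_i w i * a i j = w j * \sum_k a j k.

Section Balance.
Variables (R : realType) (n : nat) (a : 'I_n -> 'I_n -> R).
Hypothesis a0 : forall i j, 0 <= a i j.

(* A left null vector of the Laplacian [a - diag (row sums)], made nonnegative
   by taking absolute values: the balance equation survives because the
   triangle inequality is an equality once summed over [j]. *)
Lemma balanced_nonneg_exists : (0 < n)%N ->
  exists2 u : 'I_n -> R, (forall i, 0 <= u i) /\ (exists j, u j != 0) & balanced a u.
Proof.
move=> n0; pose d j := \sum_k a j k.
have d0 j : 0 <= d j by apply: sumr_ge0.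
pose L : 'M[R]_n := \matrix_(i, j) (a i j - (i == j)%:R * d i).
have deltaE (F : 'I_n -> R) i : \sum_k (i == k)%:R * F k = F i.
  rewrite (bigD1 i) //= eqxx mul1r big1 ?addr0 // => k /negbTE ik.
  by rewrite eq_sym ik mul0r.
have L1 : L *m (const_mx 1 : 'cV[R]_n) = 0.
  apply/matrixP => i j; rewrite !mxE; under eq_bigr do rewrite !mxE mulr1.
  by rewrite sumrB (deltaE (fun=> d i)) subrr.
have : \det L^T == 0.
  apply/det0P; exists (const_mx 1 : 'rV[R]_n).
    apply/negP => /eqP /matrixP /(_ 0 (Ordinal n0)); rewrite !mxE => /eqP.
    by rewrite oner_eq0.
  by rewrite -trmx_const -trmx_mul L1 trmx0.
rewrite det_tr => /det0P [v v0 vL].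
have v_bal j : \sum_i v 0 i * a i j = v 0 j * d j.
  have := congr1 (fun M : 'rV[R]_n => M 0 j) vL; rewrite !mxE.
  under eq_bigr do rewrite mxE mulrBr; rewrite sumrB.
  have -> : \sum_k v 0 k * ((k == j)%:R * d k) = v 0 j * d j.
    rewrite -(deltaE (fun k => v 0 k * d k) j); apply: eq_bigr => k _.
    by rewrite eq_sym mulrCA.
  by move/eqP; rewrite subr_eq0 => /eqP.
pose u i := `|v 0 i|.
have u_sub j : u j * d j <= \sum_i u i * a i j.
  rewrite /u -(ger0_norm (d0 j)) -normrM -v_bal.
  apply: le_trans (ler_norm_sum _ _ _) _.
  by apply: ler_sum => i _; rewrite normrM (ger0_norm (a0 _ _)).
have u_sum : \sum_j (\sum_i u i * a i j - u j * d j) = 0.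
  rewrite sumrB exchange_big /=; apply/eqP; rewrite subr_eq0; apply/eqP.
  by apply: eq_bigr => i _; rewrite mulr_sumr.
exists u; first split.
- by move=> i; exact: normr_ge0.
- apply/existsP; move: v0; apply: contraR; rewrite negb_exists => /forallP v0.
  apply/eqP/matrixP => i j; rewrite ord1 mxE; apply/eqP.
  by have := v0 j; rewrite /u normr_eq0 negbK.
move=> j; apply/eqP; rewrite -subr_eq0; apply/eqP.
by apply: (psumr_eq0P (fun j _ => _) u_sum) => // k _; rewrite subr_ge0.
Qed.

Lemma balanced_dot_sum r (w : 'I_n -> R) (y : 'I_n -> 'cV[R]_r) : balanced a w ->
  2 * \sum_i w i * \sum_j a i j * dot (y i) (y j - y i) =
  - \sum_i \sum_j w i * a i j * sqnorm (y j - y i).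
Proof.
move=> w_bal; rewrite mulr_sumr.
have expand i : 2 * (w i * \sum_j a i j * dot (y i) (y j - y i)) =
    \sum_j w i * a i j * sqnorm (y j) - \sum_j w i * a i j * sqnorm (y i)
    - \sum_j w i * a i j * sqnorm (y j - y i).
  rewrite -!sumrB !mulr_sumr; apply: eq_bigr => j _.
  by rewrite -!mulrBr -dot_sub_sqnorm; ring.
rewrite (eq_bigr _ (fun i _ => expand i)) !sumrB.
suff -> : \sum_i \sum_j w i * a i j * sqnorm (y j) =
          \sum_i \sum_j w i * a i j * sqnorm (y i) by rewrite subrr sub0r.
rewrite exchange_big /=; apply: eq_bigr => j _.
by rewrite -[LHS]mulr_suml -[RHS]mulr_suml -mulr_sumr w_bal.
Qed.

Hypothesis conn : forall i j, connect (fun i' j' => 0 < a i' j') i j.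

(* The zero set of a nonnegative balanced vector is closed under predecessors,
   so by strong connectivity it is empty as soon as one entry is nonzero. *)
Lemma balanced_gt0 (u : 'I_n -> R) j0 :
  (forall i, 0 <= u i) -> u j0 != 0 -> balanced a u -> forall i, 0 < u i.
Proof.
move=> u0 uj0 u_bal i; rewrite lt_neqAle u0 andbT eq_sym; apply/negP => /eqP ui.
have pred0 k i' : 0 < a i' k -> u k = 0 -> u i' = 0.
  move=> aik uk; have : \sum_i u i * a i k = 0 by rewrite u_bal uk mul0r.
  move/psumr_eq0P => /(_ (fun i _ => mulr_ge0 (u0 i) (a0 i k)) i' isT) /eqP.
  by rewrite mulf_eq0 (gt_eqF aik) orbF => /eqP.
suff : u j0 = 0 by move/eqP; rewrite (negbTE uj0).
have /connectP [p pp i_last] := conn j0 i; rewrite i_last in ui.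
elim: p j0 pp ui {uj0 i_last} => [|y p IH] x /= pp ux //.
by move/andP: pp => [xy pp]; exact: pred0 _ _ xy (IH _ pp ux).
Qed.

Lemma balanced_weights : exists2 w : 'I_n -> R, (forall i, 0 < w i) & balanced a w.
Proof.
case: (posnP n) => [n0|n_gt0].
  by exists (fun=> 1) => [i|j]; [move: (ltn_ord i)|move: (ltn_ord j)]; rewrite {2}n0.
have [u [u0 [j0 uj0]] u_bal] := balanced_nonneg_exists n_gt0.
exists u => //.
exact: balanced_gt0 u0 uj0 u_bal.
Qed.

End Balance.

Section Dynamics.
Variables (R : realType) (n r : nat) (m : 'I_n -> nat)
  (A : forall i, 'M[R]_(m i, r)) (b : forall i, 'cV[R]_(m i))
  (X : 'I_n -> set 'cV[R]_r) (a : 'I_n -> 'I_n -> R) (tau : R)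
  (x : 'I_n -> R -> 'cV[R]_r) (w : 'I_n -> R).
Hypotheses (cX : forall i, closed (X i)) (vX : forall i, convex_cV (X i))
  (a0 : forall i j, 0 <= a i j) (tau0 : 0 < tau)
  (w0 : forall i, 0 < w i) (w_bal : balanced a w).

Definition feasible (z : 'cV[R]_r) :=
  (forall i, X i z) /\ forall i k, (A i *m z - b i) k 0 <= 0.

Definition px i (t : R) := eproj (X i) (x i t).
Definition viol i (t : R) := pospart (A i *m x i t - b i).
Definition rhs i (t : R) : 'cV[R]_r :=
  \sum_(j < n | 0 < a i j) a i j *: (x j t - x i t)
  - tau *: ((A i)^T *m viol i t + (x i t - px i t)).

Hypothesis x_der : forall i (t : R), 0 < t -> is_derive t 1 (x i) (rhs i t).

Definition V z (t : R) := \sum_i w i * sqnorm (x i t - z).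
Definition disagreement (t : R) := \sum_i \sum_j w i * a i j * sqnorm (x j t - x i t).
Definition infeasibility (t : R) := \sum_i w i * (sqnorm (viol i t) + sqnorm (x i t - px i t)).
Definition dissipation (t : R) := disagreement t + 2 * tau * infeasibility t.

Lemma px_is_proj z i t : feasible z -> is_proj (X i) (x i t) (px i t).
Proof. by move=> [zX _]; apply: eproj_is_proj => //; exists z. Qed.

Lemma rhsE i t : rhs i t = \sum_j a i j *: (x j t - x i t)
  - tau *: ((A i)^T *m viol i t + (x i t - px i t)).
Proof.
rewrite /rhs big_mkcond /=; congr (_ - _); apply: eq_bigr => j _.
case: ltP => // aij; suff -> : a i j = 0 by rewrite scale0r.
by apply/eqP; rewrite eq_le aij a0.
Qed.

Lemma V_ge0 z t : 0 <= V z t.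
Proof. by apply: sumr_ge0 => i _; rewrite mulr_ge0 ?sqnorm_ge0 ?ltW. Qed.

Lemma disagreement_summand_ge0 t i j : 0 <= w i * a i j * sqnorm (x j t - x i t).
Proof. by rewrite !mulr_ge0 ?sqnorm_ge0 ?a0 ?ltW. Qed.

Lemma infeasibility_summand_ge0 t i :
  0 <= w i * (sqnorm (viol i t) + sqnorm (x i t - px i t)).
Proof. by rewrite mulr_ge0 ?addr_ge0 ?sqnorm_ge0 ?ltW. Qed.

Lemma disagreement_ge0 t : 0 <= disagreement t.
Proof.
by apply: sumr_ge0 => i _; apply: sumr_ge0 => j _; exact: disagreement_summand_ge0.
Qed.

Lemma infeasibility_ge0 t : 0 <= infeasibility t.
Proof. by apply: sumr_ge0 => i _; exact: infeasibility_summand_ge0. Qed.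

Lemma dissipation_ge0 t : 0 <= dissipation t.
Proof.
by rewrite addr_ge0 ?disagreement_ge0 // !mulr_ge0 ?infeasibility_ge0 ?ltW.
Qed.

Lemma disagreement_lt t i j c : 0 < a i j ->
  dissipation t < w i * a i j * c -> sqnorm (x j t - x i t) < c.
Proof.
move=> aij Gt; rewrite -(ltr_pM2l (mulr_gt0 (w0 i) aij)); apply: le_lt_trans Gt.
have Q_le : disagreement t <= dissipation t.
  by rewrite lerDl !mulr_ge0 ?infeasibility_ge0 ?ltW.
apply: le_trans Q_le.
pose Qi i := \sum_j w i * a i j * sqnorm (x j t - x i t).
apply: (@le_trans _ _ (Qi i)); last first.
  by apply: ler_term_sum => k; apply: sumr_ge0 => l _; exact: disagreement_summand_ge0.
exact: ler_term_sum j (disagreement_summand_ge0 t i).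
Qed.

Lemma infeasibility_lt t i c : dissipation t < 2 * tau * w i * c ->
  sqnorm (viol i t) + sqnorm (x i t - px i t) < c.
Proof.
move=> Gt; have c0 : 0 < 2 * tau * w i by rewrite !mulr_gt0.
rewrite -(ltr_pM2l c0); apply: le_lt_trans Gt.
apply: le_trans (_ : 2 * tau * infeasibility t <= _); last first.
  by rewrite lerDr disagreement_ge0.
rewrite -[2 * tau * w i * _]mulrA; apply: ler_wpM2l; first by rewrite mulr_ge0 ?ltW.
exact: ler_term_sum i (infeasibility_summand_ge0 t).
Qed.

Lemma is_derive_V z (t : R) : 0 < t ->
  is_derive t 1 (V z) (\sum_i w i * (2 * dot (x i t - z) (rhs i t))).
Proof.
move=> t0; have -> : V z = \sum_i (fun s => w i * sqnorm (x i s - z)).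
  by apply/funext => s; rewrite fct_sumE.
apply: is_derive_sum => i.
by have := is_deriveZ (w i) (is_derive_sqnorm z (x_der i t0)); rewrite /GRing.scale.
Qed.

Lemma dV_le z (t : R) : feasible z ->
  \sum_i w i * (2 * dot (x i t - z) (rhs i t)) <= - dissipation t.
Proof.
move=> fz; pose y i := x i t - z.
have yB i j : x j t - x i t = y j - y i by apply/matrixP => k l; rewrite !mxE; ring.
pose c i := dot (y i) ((A i)^T *m viol i t) + dot (y i) (x i t - px i t).
have split_rhs i : w i * (2 * dot (y i) (rhs i t)) =
    2 * (w i * \sum_j a i j * dot (y i) (y j - y i)) - 2 * tau * (w i * c i).
  rewrite rhsE dotBr dot_sumr dotZr dotDr.
  by under eq_bigr do rewrite yB; rewrite /c; ring.
rewrite (eq_bigr _ (fun i _ => split_rhs i)) sumrB -!mulr_sumr balanced_dot_sum //.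
have -> : \sum_i \sum_j w i * a i j * sqnorm (y j - y i) = disagreement t.
  by apply: eq_bigr => i _; apply: eq_bigr => j _; rewrite yB.
have : infeasibility t <= \sum_i w i * c i.
  apply: ler_sum => i _; apply: ler_wpM2l; first exact: ltW.
  rewrite /c /y; apply: lerD; first exact: sqnorm_pospart_le_dot (fz.2 i).
  exact: sqnorm_proj_le_dot (@vX i) (px_is_proj i t fz) (fz.1 i).
rewrite /dissipation; have := tau0; nra.
Qed.

Lemma V_nincr z : feasible z -> forall s t, 0 < s -> s <= t -> V z t <= V z s.
Proof.
move=> fz; apply: deriv_le0_nincr => [u|u _]; first exact: is_derive_V.
by apply: le_trans (dV_le u fz) _; rewrite oppr_le0 dissipation_ge0.
Qed.

Lemma exists_small_dissipation z : feasible z ->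
  forall e, 0 < e -> exists t, 1 <= t /\ dissipation t < e.
Proof.
move=> fz e; apply: (@dissipation_small _ (V z) _ _ 0) => [u|u _|u]; last exact: V_ge0.
- exact: is_derive_V.
- exact: dV_le.
Qed.

Lemma x_bounded z : feasible z ->
  exists B, forall t, 1 <= t -> forall i k, `|x i t k 0| <= B.
Proof.
move=> fz; pose M := \sum_j V z 1 / w j.
exists (\sum_k `|z k 0| + 1 + M) => t t1 i k.
have dist_sqr : (x i t k 0 - z k 0) ^+ 2 <= M.
  apply: le_trans (ler_term_sum i (fun j => divr_ge0 (V_ge0 z 1) (ltW (w0 j)))).
  rewrite ler_pdivlMr // mulrC; apply: le_trans (V_nincr fz ltr01 t1).
  apply: le_trans (ler_term_sum i (fun j => mulr_ge0 (ltW (w0 j)) (sqnorm_ge0 (x j t - z)))).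
  apply: ler_wpM2l; first exact: ltW.
  by have := sqr_entry_le_sqnorm (x i t - z) k; rewrite !mxE.
have := ler_term_sum k (fun j => normr_ge0 (z j 0)).
have := norm_le_1_sqr (x i t k 0 - z k 0).
have := ler_distD (z k 0) (x i t k 0) 0; rewrite !subr0.
lra.
Qed.

Lemma cluster_point z : feasible z -> exists p : 'M[R]_(n, r),
  forall e d, 0 < e -> 0 < d -> exists t,
    [/\ 1 <= t, dissipation t < e & forall i k, `|x i t k 0 - p i k| < d].
Proof.
move=> fz; have [B x_le] := x_bounded fz.
pose S t : 'M[R]_(n, r) := \matrix_(i, k) x i t k 0.
have S_box (t : R) : 1 <= t -> [set M : 'M[R]_(n, r) | forall i k, `|M i k| <= B] (S t).
  by move=> t1 i k; rewrite mxE; exact: x_le.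
have [p p_cluster] := compact_cluster (@box_compact _ n r B) S_box (exists_small_dissipation fz).
exists p => e d e0 d0.
have p_nbhs : nbhs p [set M : 'M[R]_(n, r) | forall i k, `|M i k - p i k| < d].
  by apply/nbhs_ballP; exists d => //= M [_ pM] i k; rewrite distrC; exact: pM.
have [t [t1 Gt St]] := p_cluster e _ e0 p_nbhs.
by exists t; split => // i k; have := St i k; rewrite mxE.
Qed.

Lemma cluster_rows_eq (p : 'M[R]_(n, r)) :
  (forall e d, 0 < e -> 0 < d -> exists t,
    [/\ 1 <= t, dissipation t < e & forall i k, `|x i t k 0 - p i k| < d]) ->
  forall i j, 0 < a i j -> forall k, p i k = p j k.
Proof.
move=> p_near i j aij k; apply/eqP; rewrite -subr_eq0 -normr_le0.
apply/ler_addgt0Pr => eta eta0; rewrite add0r.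
have e0 : 0 < w i * a i j * (eta / 2) ^+ 2 by rewrite !mulr_gt0 ?exprn_gt0 ?divr_gt0.
have eta4 : 0 < eta / 4 by rewrite divr_gt0.
have eta2 : 0 < eta / 2 by rewrite divr_gt0.
have [t [_ Gt near]] := p_near _ _ e0 eta4.
have := norm_entry_lt_of_sqnorm k eta2 (disagreement_lt aij Gt).
rewrite !mxE; have := near i k; have := near j k.
have := ler_distD (x i t k 0) (p i k) (p j k).
have := ler_distD (x j t k 0) (x i t k 0) (p j k).
have := distrC (p i k) (x i t k 0); have := distrC (x j t k 0) (x i t k 0).
have := distrC (x j t k 0) (p j k); lra.
Qed.

Hypothesis conn : forall i j, connect (fun i' j' => 0 < a i' j') i j.

Lemma consensus_cluster z : feasible z -> exists xs : 'cV[R]_r,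
  forall e d, 0 < e -> 0 < d -> exists t,
    [/\ 1 <= t, dissipation t < e & forall i k, `|x i t k 0 - xs k 0| < d].
Proof.
move=> fz; have [p p_near] := cluster_point fz.
have rows_eq i j k : p i k = p j k.
  have /connectP [s s_path ->] := conn i j.
  elim: s i s_path => [|y s IH] i //= /andP [iy s_path].
  by rewrite (cluster_rows_eq p_near iy) IH.
case: (pickP (@predT 'I_n)) => [i0 _ | no_agent].
  exists (\col_k p i0 k) => e d e0 d0; have [t [t1 Gt near]] := p_near e d e0 d0.
  by exists t; split => // i k; rewrite mxE -(rows_eq i i0).
exists 0 => e d e0 d0; have [t [t1 Gt _]] := p_near e d e0 d0.
by exists t; split => // i; have := no_agent i.
Qed.

Section Limit.
Variable xs : 'cV[R]_r.
Hypothesis xs_near : forall e d, 0 < e -> 0 < d -> exists t,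
  [/\ 1 <= t, dissipation t < e & forall i k, `|x i t k 0 - xs k 0| < d].

Lemma cluster_in_X z : feasible z -> forall i, X i xs.
Proof.
move=> fz i; apply: (@cX i) => U /nbhs_ballP [d d0 dU].
have e0 : 0 < 2 * tau * w i * (d / 2) ^+ 2 by rewrite !mulr_gt0 ?exprn_gt0 ?divr_gt0.
have d2 : 0 < d / 2 by rewrite divr_gt0.
have [t [_ Gt near]] := xs_near e0 d2.
have [Xp _] := px_is_proj i t fz.
exists (px i t); split => //; apply: dU; split => // k l; rewrite [l]ord1 /ball /=.
have := infeasibility_lt Gt; have := sqnorm_ge0 (viol i t) => viol0 px_lt.
have := norm_entry_lt_of_sqnorm k d2 (_ : sqnorm (x i t - px i t) < (d / 2) ^+ 2).
rewrite !mxE => /(_ ltac:(lra)); have := near i k.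
have := ler_distD (x i t k 0) (xs k 0) (px i t k 0).
have := distrC (xs k 0) (x i t k 0); lra.
Qed.

Lemma cluster_constraints i k : (A i *m xs - b i) k 0 <= 0.
Proof.
rewrite leNgt; apply/negP => cs0; set cs := (A i *m xs - b i) k 0 in cs0.
pose L := \sum_l `|A i k l|.
have L0 : 0 <= L by apply: sumr_ge0.
pose d := cs / (2 * (L + 1)).
have d0 : 0 < d by rewrite divr_gt0 // mulr_gt0 // ltr_wpDl.
have dL : d * (2 * (L + 1)) = cs by rewrite /d divfK // gt_eqF // mulr_gt0 // ltr_wpDl.
have e0 : 0 < 2 * tau * w i * (cs / 2) ^+ 2 by rewrite !mulr_gt0 ?exprn_gt0 ?divr_gt0.
have [t [_ Gt near]] := xs_near e0 d0.
set ct := (A i *m x i t - b i) k 0.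
have : `|ct - cs| <= L * d.
  by apply: affine_entry_lipschitz => l; exact: ltW (near i l).
rewrite ler_norml => /andP [ct_lo _].
have ct0 : 0 <= ct by nra.
have := sqr_entry_le_sqnorm_pospart ct0; have := infeasibility_lt Gt.
have := sqnorm_ge0 (x i t - px i t); rewrite /viol -/ct; nra.
Qed.

Lemma V_cluster_small c : 0 < c -> exists t, 1 <= t /\ V xs t < c.
Proof.
move=> c0; pose W := \sum_j w j.
have W0 : 0 <= W by apply: sumr_ge0 => j _; exact: ltW.
have Wr1 : 0 < W * r%:R + 1 by rewrite ltr_wpDl ?mulr_ge0.
pose d := Num.sqrt (c / (W * r%:R + 1)).
have d0 : 0 < d by rewrite sqrtr_gt0 divr_gt0.
have [t [t1 _ near]] := xs_near ltr01 d0.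
exists t; split => //; apply: (@le_lt_trans _ _ (W * (r%:R * d ^+ 2))).
  rewrite /V /W mulr_suml; apply: ler_sum => j _; apply: ler_wpM2l; first exact: ltW.
  by apply: sqnorm_le_of_entries => k; rewrite !mxE; exact: ltW (near j k).
rewrite sqr_sqrtr ?divr_ge0 ?ltW //.
have -> : W * (r%:R * (c / (W * r%:R + 1))) = c * (W * r%:R / (W * r%:R + 1)).
  by field; rewrite gt_eqF.
by rewrite gtr_pMr // ltr_pdivrMr // mul1r ltrDl.
Qed.

Lemma trajectories_cvg : feasible xs -> forall i, x i t @[t --> +oo] --> xs.
Proof.
move=> fxs i U /nbhs_ballP [e e0 eU].
have [t0 [t01 Vt0]] := V_cluster_small (mulr_gt0 (w0 i) (exprn_gt0 2 e0)).
rewrite nbhs_filterE; exists t0; split; first exact: num_real.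
move=> t tt0; apply: eU; split => // k l; rewrite [l]ord1 /ball /= distrC.
have := norm_entry_lt_of_sqnorm k e0 (_ : sqnorm (x i t - xs) < e ^+ 2).
rewrite !mxE; apply; rewrite -(ltr_pM2l (w0 i)); apply: le_lt_trans Vt0.
apply: le_trans (V_nincr fxs (lt_le_trans ltr01 t01) (ltW tt0)).
exact: ler_term_sum i (fun j => mulr_ge0 (ltW (w0 j)) (sqnorm_ge0 (x j t - xs))).
Qed.

End Limit.
End Dynamics.

Unset Implicit Arguments.
Set Strict Implicit.

Theorem theorem6 (R : realType) (n r : nat) (m : 'I_n -> nat)
  (A : forall i : 'I_n, 'M[R]_(m i, r)) (b : forall i : 'I_n, 'cV[R]_(m i))
  (X : 'I_n -> set 'cV[R]_r)
  (a : 'I_n -> 'I_n -> R) (tau : R)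
  (x : 'I_n -> R -> 'cV[R]_r) :
  (forall i, closed (X i)) ->
  (forall i, convex_cV (X i)) ->
  (exists z : 'cV[R]_r, (forall i, X i z) /\
      forall i (k : 'I_(m i)), (A i *m z - b i) k 0 <= 0) ->
  (forall i j, 0 <= a i j) ->
  (forall i j, connect (fun i' j' => 0 < a i' j') i j) ->
  0 < tau ->
  (forall i (t : R), 0 < t ->
     is_derive t 1 (x i)
       (\sum_(j < n | 0 < a i j) a i j *: (x j t - x i t)
        - tau *: ((A i)^T *m pospart (A i *m x i t - b i)
                  + (x i t - eproj (X i) (x i t))))) ->
  exists xs : 'cV[R]_r,
    ((forall i, X i xs) /\ forall i (k : 'I_(m i)), (A i *m xs - b i) k 0 <= 0) /\
    forall i, x i t @[t --> +oo] --> xs.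
Proof.
move=> cX vX [z fz] a0 conn tau0 x_der.
have [w w0 w_bal] := balanced_weights a0 conn.
have [xs xs_near] := consensus_cluster cX vX a0 tau0 w0 w_bal x_der conn fz.
have xs_feas : (forall i, X i xs) /\ forall i k, (A i *m xs - b i) k 0 <= 0.
  by split; [exact: (cluster_in_X cX a0 tau0 w0 xs_near fz)|exact: (cluster_constraints a0 tau0 w0 xs_near)].
by exists xs; split=> //; exact: (trajectories_cvg cX vX a0 tau0 w0 w_bal x_der xs_near xs_feas).
Qed.
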